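(* Let $T>0$, $\beta=1/T$, let $I\ge 2$, let $E_1,\dots,E_I>0$, and let $p_1,\dots,p_I$ be integer multiples of $2\pi T$ (the external Euclidean energies entering the $I$ vertices of a one-loop graph with $I$ vertices and $I$ internal lines). Set $u_1=0$ and $u_j=\sum_{l=2}^{j}p_l$ for $j=2,\dots,I$. Define $$D(p,E,T)=\Big(\prod_{j=1}^I 2E_j\Big)\,T\sum_{n\in\mathbb{Z}}\ \prod_{j=1}^I\frac{1}{(2\pi T n+u_j)^2+E_j^2},$$ and, for real $E_1,\dots,E_I$, $$d_l(p,E)=\prod_{j\neq l}\ \sum_{\sigma_j=\pm1}\frac{\sigma_j}{i(u_j-u_l)-E_l-\sigma_jE_j}\quad(l=1,\dots,I),\qquad D_0(p,E)=(-1)^{I+1}\sum_{l=1}^I d_l(p,E).$$ Assume that $i(u_j-u_l)+\sigma E_l+\sigma' E_j\neq 0$ for all $j\neq l$ and all $\sigma,\sigma'\in\{\pm1\}$. Then: (i) for any two distinct indices $i\neq j$ in $\{1,\dots,I\}$, $(1+\mathcal{S}_i)(1+\mathcal{S}_j)D_0(p,E)=0$ (so $D_0$ is annihilated by $\prod_{i\in C}(1+\mathcal{S}_i)$ for every set $C$ of at least two lines, i.e. every set of lines whose removal disconnects the loop); (ii) $D(p,E,T)=\Big[1+\sum_{j=1}^I n(E_j)(1+\mathcal{S}_j)\Big]D_0(p,E)=\Big[\prod_{j=1}^I\big(1+n(E_j)(1+\mathcal{S}_j)\big)\Big]D_0(p,E)$.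
   Context: $n(E)=(e^{\beta E}-1)^{-1}$ is the Bose–Einstein factor. $\mathcal{S}_j$ is the reflection operator in the variable $E_j$: $(\mathcal{S}_jf)(E_1,\dots,E_j,\dots,E_I)=f(E_1,\dots,-E_j,\dots,E_I)$. The reflections act only on $D_0$, regarded as a function of independent real variables $E_1,\dots,E_I$ (with $p$ fixed); the factors $n(E_j)$ are multiplicative constants evaluated at the given positive $E_j$, and after applying the operators one evaluates at the given positive $E_j$. *)

From Stdlib Require Import Reals ZArith List Lia.
From Coquelicot Require Import Coquelicot.
Import ListNotations.
Open Scope R_scope.

(* Indices run over 1..I (as in the paper); vectors are functions nat -> R. *)
Definition idx (I : nat) : list nat := seq 1 I.

Definition Rsum (l : list nat) (f : nat -> R) : R := fold_right (fun j acc => f j + acc) 0 l.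
Definition Rprod (l : list nat) (f : nat -> R) : R := fold_right (fun j acc => f j * acc) 1 l.
Definition Csum (l : list nat) (f : nat -> C) : C := fold_right (fun j acc => Cplus (f j) acc) (RtoC 0) l.
Definition Cprod (l : list nat) (f : nat -> C) : C := fold_right (fun j acc => Cmult (f j) acc) (RtoC 1) l.

(* Sum over n in Z of f n, written as the series over k >= 0 of f k + f (-k-1). *)
Definition Zsum (f : Z -> R) : R :=
  Series (fun k : nat => f (Z.of_nat k) + f (- Z.of_nat k - 1)%Z).

Definition nB (T E : R) : R := / (exp (E / T) - 1).

Definition u (p : nat -> R) (j : nat) : R := Rsum (seq 2 (j - 1)) p.

Definition Dfull (I : nat) (p E : nat -> R) (T : R) : R :=
  Rprod (idx I) (fun j => 2 * E j) * T *
  Zsum (fun n => Rprod (idx I)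
          (fun j => / ((2 * PI * T * IZR n + u p j) ^ 2 + (E j) ^ 2))).

Definition d_l (I : nat) (p E : nat -> R) (l : nat) : C :=
  Cprod (filter (fun j => negb (Nat.eqb j l)) (idx I))
    (fun j => fold_right
       (fun s acc => Cplus (Cdiv (RtoC s)
           (Cminus (Cminus (Cmult Ci (RtoC (u p j - u p l))) (RtoC (E l)))
                   (RtoC (s * E j)))) acc)
       (RtoC 0) [1; -1]).

Definition D0 (I : nat) (p : nat -> R) (E : nat -> R) : C :=
  Cmult (RtoC ((-1) ^ (I + 1))) (Csum (idx I) (d_l I p E)).

Definition flip (j : nat) (E : nat -> R) : nat -> R :=
  fun k => if Nat.eqb k j then - E k else E k.

Definition Sop (j : nat) (F : (nat -> R) -> C) : (nat -> R) -> C :=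
  fun E => F (flip j E).
Definition onePlusS (j : nat) (F : (nat -> R) -> C) : (nat -> R) -> C :=
  fun E => Cplus (F E) (Sop j F E).

Definition opBose (j : nat) (c : R) (F : (nat -> R) -> C) : (nat -> R) -> C :=
  fun E => Cplus (F E) (Cmult (RtoC c) (onePlusS j F E)).

(* [1 + sum_j n(E_j)(1+S_j)] F, evaluated at E (constants n(E_j) at the given E). *)
Definition linearBose (I : nat) (T : R) (E : nat -> R) (F : (nat -> R) -> C) : C :=
  Cplus (F E) (Csum (idx I) (fun j => Cmult (RtoC (nB T (E j))) (onePlusS j F E))).

Definition prodBose (I : nat) (T : R) (E : nat -> R) (F : (nat -> R) -> C) : C :=
  fold_right (fun j G => opBose j (nB T (E j)) G) F (idx I) E.

(* Since the p_l are multiples of 2 pi T, so are the u_l.  The summand of D, as a function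
   of x = 2 pi T n, is prod_j 2 E_j / ((x + u_j)^2 + E_j^2), with simple poles at -u_j +- i E_j.
   Partial fractions write it as sum_l [alpha_l (x + u_l) + gamma_l E_l] / ((x + u_l)^2 + E_l^2),
   and computing the residues gives gamma_l = (1 + S_l) D_0, sum_l alpha_l = 0 and
   D_0 = sum_l (gamma_l + i alpha_l) / 2.  Summing over n symmetrically, the odd parts
   (x + u_l) / ... contribute nothing, while T sum_n E / ((2 pi T n + u)^2 + E^2) = (1 + 2 n(E)) / 2;
   this gives D = D_0 + sum_l n(E_l) (1 + S_l) D_0.  The last sum is pi coth(pi a) =
   sum_n a / (n^2 + a^2) with a = E / (2 pi T), proved without Fourier analysis: the periodised
   Lorentzian Phi(s, b) = sum_n b / ((n + s)^2 + b^2) has a closed form satisfying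
   Phi(s/2, b/2) + Phi((s+1)/2, b/2) = 2 Phi(s, b), so Phi(0, a) is the sum of 2^(k+1) values
   of Phi at scale 2^-(k+1), each within O(4^-k) of the corresponding a / (n^2 + a^2);
   monotonicity of the partial sums then gives convergence.
   Part (i): for k <> l, d_k is odd under E_l -> -E_l, since only its factor j = l depends on E_l;
   hence (1 + S_i)(1 + S_j) annihilates every d_k, and for the same reason all cross terms of
   the product formula vanish, so it equals the linear one. *)

From Stdlib Require Import Reals ZArith List Lia Lra Psatz FunctionalExtensionality.
From Coquelicot Require Import Coquelicot.
Import ListNotations.
Open Scope R_scope.

(** * Symmetric partial sums over Z *)

Fixpoint sum_lt (n : nat) (f : nat -> R) : R :=
  match n with O => 0 | S n' => sum_lt n' f + f n' end.

Lemma sum_lt_ext n f g : (forall k, (k < n)%nat -> f k = g k) -> sum_lt n f = sum_lt n g.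
Proof.
  induction n as [|n IH]; intros H; simpl; [reflexivity|].
  rewrite IH by (intros; apply H; lia). rewrite H by lia. reflexivity.
Qed.

Lemma sum_lt_plus n f g : sum_lt n (fun k => f k + g k) = sum_lt n f + sum_lt n g.
Proof. induction n; simpl; [ring|]. rewrite IHn; ring. Qed.

Lemma sum_lt_scal n c f : sum_lt n (fun k => c * f k) = c * sum_lt n f.
Proof. induction n; simpl; [ring|]. rewrite IHn; ring. Qed.

Lemma sum_lt_const n c : sum_lt n (fun _ => c) = INR n * c.
Proof. induction n; cbn [sum_lt]; [simpl; ring|]. rewrite IHn, S_INR; ring. Qed.

Lemma sum_lt_add a b f : sum_lt (a + b) f = sum_lt a f + sum_lt b (fun k => f (a + k)%nat).
Proof.
  induction b; simpl; [rewrite Nat.add_0_r; ring|].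
  rewrite Nat.add_succ_r; simpl. rewrite IHb; ring.
Qed.

Lemma sum_lt_rev n f : sum_lt n f = sum_lt n (fun k => f (n - 1 - k)%nat).
Proof.
  induction n as [|n IH]; [reflexivity|].
  replace (S n) with (1 + n)%nat at 2 by lia. rewrite sum_lt_add. simpl.
  rewrite IH, !Nat.sub_0_r, Rplus_0_l, Rplus_comm. f_equal.
  apply sum_lt_ext. intros k Hk. f_equal. lia.
Qed.

Lemma sum_lt_abs n f : Rabs (sum_lt n f) <= sum_lt n (fun k => Rabs (f k)).
Proof.
  induction n; simpl; [rewrite Rabs_R0; lra|].
  eapply Rle_trans; [apply Rabs_triang|]. lra.
Qed.

Lemma sum_lt_le n f g : (forall k, (k < n)%nat -> f k <= g k) -> sum_lt n f <= sum_lt n g.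
Proof.
  induction n; simpl; intros H; [lra|].
  assert (sum_lt n f <= sum_lt n g) by (apply IHn; intros; apply H; lia).
  assert (f n <= g n) by (apply H; lia). lra.
Qed.

(* The sum of [g n] over [-K <= n < K]: the partial sums of the series defining [Zsum g]. *)
Definition zpart (K : nat) (g : Z -> R) : R :=
  sum_lt K (fun k => g (Z.of_nat k) + g (- Z.of_nat k - 1)%Z).

Lemma zpart_ext K g h : (forall n, g n = h n) -> zpart K g = zpart K h.
Proof. intros H. apply sum_lt_ext. intros. rewrite !H. reflexivity. Qed.

Lemma zpart_plus K g h : zpart K (fun n => g n + h n) = zpart K g + zpart K h.
Proof. unfold zpart. rewrite <- sum_lt_plus. apply sum_lt_ext. intros; ring. Qed.

Lemma zpart_scal K c g : zpart K (fun n => c * g n) = c * zpart K g.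
Proof. unfold zpart. rewrite <- sum_lt_scal. apply sum_lt_ext. intros; ring. Qed.

Lemma zpart_S K g : zpart (S K) g = zpart K g + g (Z.of_nat K) + g (- Z.of_nat K - 1)%Z.
Proof. unfold zpart. simpl. ring. Qed.

Lemma zpart_minus K g h : zpart K (fun n => g n - h n) = zpart K g - zpart K h.
Proof. induction K; [unfold zpart; simpl; ring|]. rewrite !zpart_S, IHK. ring. Qed.

Lemma zpart_zero K : zpart K (fun _ => 0) = 0.
Proof. induction K; [reflexivity|]. rewrite zpart_S, IHK. ring. Qed.

Lemma zpart_shift1 K g :
  zpart K (fun n => g (n + 1)%Z) = zpart K g + g (Z.of_nat K) - g (- Z.of_nat K)%Z.
Proof.
  induction K; [unfold zpart; simpl; ring|].
  rewrite !zpart_S, IHK.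
  replace (- Z.of_nat K - 1 + 1)%Z with (- Z.of_nat K)%Z by lia.
  replace (Z.of_nat (S K)) with (Z.of_nat K + 1)%Z by lia.
  replace (- (Z.of_nat K + 1))%Z with (- Z.of_nat K - 1)%Z by lia. ring.
Qed.

Lemma zpart_shift K g m :
  zpart K (fun n => g (n + Z.of_nat m)%Z) =
  zpart K g + sum_lt m (fun i => g (Z.of_nat K + Z.of_nat i)%Z - g (- Z.of_nat K + Z.of_nat i)%Z).
Proof.
  induction m; simpl.
  - rewrite Rplus_0_r. apply zpart_ext. intros; f_equal; lia.
  - rewrite (zpart_ext K _ (fun n => g (n + 1 + Z.of_nat m)%Z)) by (intros; f_equal; lia).
    rewrite (zpart_shift1 K (fun n => g (n + Z.of_nat m)%Z)), IHm. ring.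
Qed.

Lemma zpart_odd K g : (forall n, g (- n)%Z = - g n) -> zpart K g = g 0%Z - g (Z.of_nat K).
Proof.
  intros Hodd. induction K; [unfold zpart; simpl; ring|].
  rewrite zpart_S, IHK.
  replace (- Z.of_nat K - 1)%Z with (- Z.of_nat (S K))%Z by lia.
  rewrite Hodd. ring.
Qed.

Lemma zpart_abs_le K g B :
  (forall n, (- Z.of_nat K <= n <= Z.of_nat K)%Z -> Rabs (g n) <= B) ->
  Rabs (zpart K g) <= 2 * INR K * B.
Proof.
  intros H. eapply Rle_trans; [apply sum_lt_abs|].
  replace (2 * INR K * B) with (sum_lt K (fun _ => 2 * B)) by (rewrite sum_lt_const; ring).
  apply sum_lt_le. intros k Hk.
  eapply Rle_trans; [apply Rabs_triang|].
  assert (Rabs (g (Z.of_nat k)) <= B) by (apply H; lia).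
  assert (Rabs (g (- Z.of_nat k - 1)%Z) <= B) by (apply H; lia). lra.
Qed.

Lemma zpart_le_nonneg K K' g : (forall n, 0 <= g n) -> (K <= K')%nat -> zpart K g <= zpart K' g.
Proof.
  intros Hg HK. induction HK; [lra|]. rewrite zpart_S.
  pose proof (Hg (Z.of_nat m)). pose proof (Hg (- Z.of_nat m - 1)%Z). lra.
Qed.

Lemma zpart_as_sum_lt N g :
  sum_lt (N + N) (fun j => g (Z.of_nat j - Z.of_nat N)%Z) = zpart N g.
Proof.
  rewrite sum_lt_add. unfold zpart. rewrite sum_lt_plus, Rplus_comm. f_equal.
  - apply sum_lt_ext. intros; f_equal; lia.
  - rewrite sum_lt_rev. apply sum_lt_ext. intros; f_equal; lia.
Qed.

Lemma Zsum_of_lim g (l : R) : is_lim_seq (fun K => zpart K g) l -> Zsum g = l.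
Proof.
  intros H. apply is_series_unique. apply is_lim_seq_incr_1 in H.
  apply (is_lim_seq_ext _ (sum_n (fun k : nat => g (Z.of_nat k) + g (- Z.of_nat k - 1)%Z))) in H;
    [exact H|].
  intros n. induction n.
  - rewrite sum_O. unfold zpart. simpl. ring.
  - rewrite sum_Sn, <- IHn, (zpart_S (S n)). unfold plus; simpl. ring.
Qed.

Definition vanishing (g : Z -> R) : Prop :=
  forall eps, 0 < eps -> exists M : nat, forall n, (Z.of_nat M <= Z.abs n)%Z -> Rabs (g n) <= eps.

Lemma vanishing_lim g c : vanishing g ->
  is_lim_seq (fun K => g (Z.of_nat K + c)%Z) 0 /\ is_lim_seq (fun K => g (- Z.of_nat K + c)%Z) 0.
Proof.
  intros Hv. split; apply is_lim_seq_spec; intros eps; pose proof (cond_pos eps);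
    destruct (Hv (eps / 2)) as [M HM]; try lra;
    exists (M + Z.to_nat (Z.abs c))%nat; intros K HK; rewrite Rminus_0_r;
    (apply Rle_lt_trans with (eps / 2); [apply HM; lia|lra]).
Qed.

Lemma vanishing_of_inv_bound g C : 0 < C ->
  (forall n, n <> 0%Z -> Rabs (g n) <= C / Rabs (IZR n)) -> vanishing g.
Proof.
  intros HC Hg eps Heps.
  destruct (INR_unbounded (C / eps)) as [M HM]. exists (S M). intros n Hn.
  assert (Hn' : INR (S M) <= Rabs (IZR n)) by (rewrite <- abs_IZR, INR_IZR_INZ; apply IZR_le; exact Hn).
  rewrite S_INR in Hn'. pose proof (pos_INR M).
  eapply Rle_trans; [apply Hg; intros ->; rewrite Rabs_R0 in Hn'; lra|].
  apply Rle_div_l; [lra|]. apply Rlt_div_l in HM; [nra|lra].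
Qed.

Lemma lim_sum_lt_boundary g c m : vanishing g ->
  is_lim_seq (fun K => sum_lt m (fun i =>
    g (Z.of_nat K + Z.of_nat i + c)%Z - g (- Z.of_nat K + Z.of_nat i + c)%Z)) 0.
Proof.
  intros Hv. induction m as [|m IH]; simpl; [apply is_lim_seq_const|].
  replace (Finite 0) with (Finite (0 + (0 - 0))) by (f_equal; ring).
  apply is_lim_seq_plus'; [exact IH|].
  destruct (vanishing_lim g (Z.of_nat m + c) Hv) as [H1 H2].
  apply is_lim_seq_minus';
    [eapply is_lim_seq_ext; [|exact H1]|eapply is_lim_seq_ext; [|exact H2]];
    intros K; simpl; f_equal; lia.
Qed.

Lemma lim_zpart_shift_diff g c m : vanishing g ->
  is_lim_seq (fun K => zpart K (fun n => g (n + Z.of_nat m + c)%Z) - zpart K (fun n => g (n + c)%Z)) 0.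
Proof.
  intros Hv. eapply is_lim_seq_ext; [|exact (lim_sum_lt_boundary g c m Hv)].
  intros K. simpl.
  pose proof (zpart_shift K (fun n => g (n + c)%Z) m) as Hs. cbv beta in Hs.
  rewrite Hs. ring_simplify.
  apply sum_lt_ext. intros i _. f_equal; f_equal; lia.
Qed.

Lemma lim_zpart_shift g m (V : R) : vanishing g ->
  is_lim_seq (fun K => zpart K g) V -> is_lim_seq (fun K => zpart K (fun n => g (n + m)%Z)) V.
Proof.
  intros Hv HV. destruct (Z_le_gt_dec 0 m) as [Hm|Hm].
  - pose proof (lim_zpart_shift_diff g 0 (Z.to_nat m) Hv) as Hd.
    replace (Finite V) with (Finite (0 + V)) by (f_equal; ring).
    apply (is_lim_seq_ext (fun K => (zpart K (fun n => g (n + Z.of_nat (Z.to_nat m) + 0)%Z)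
      - zpart K (fun n => g (n + 0)%Z)) + zpart K g)).
    + intros K. rewrite (zpart_ext K (fun n => g (n + 0)%Z) g) by (intros; f_equal; lia).
      rewrite (zpart_ext K (fun n => g (n + Z.of_nat (Z.to_nat m) + 0)%Z) (fun n => g (n + m)%Z))
        by (intros; f_equal; lia). ring.
    + apply is_lim_seq_plus'; assumption.
  - pose proof (lim_zpart_shift_diff g m (Z.to_nat (- m)) Hv) as Hd.
    replace (Finite V) with (Finite (V - 0)) by (f_equal; ring).
    apply (is_lim_seq_ext (fun K => zpart K g - (zpart K (fun n => g (n + Z.of_nat (Z.to_nat (- m)) + m)%Z)
      - zpart K (fun n => g (n + m)%Z)))).
    + intros K.
      rewrite (zpart_ext K (fun n => g (n + Z.of_nat (Z.to_nat (- m)) + m)%Z) g) by (intros; f_equal; lia).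
      ring.
    + apply is_lim_seq_minus'; assumption.
Qed.

Lemma lim_zpart_odd g : (forall n, g (- n)%Z = - g n) -> vanishing g ->
  is_lim_seq (fun K => zpart K g) 0.
Proof.
  intros Hodd Hv.
  assert (H0 : g 0%Z = 0) by (pose proof (Hodd 0%Z) as H; simpl in H; lra).
  apply (is_lim_seq_ext (fun K => - g (Z.of_nat K + 0)%Z)).
  - intros K. rewrite zpart_odd, H0, Z.add_0_r by exact Hodd. ring.
  - replace (Finite 0) with (Rbar_opp 0) by (simpl; f_equal; ring).
    apply (proj1 (is_lim_seq_opp _ _)), (proj1 (vanishing_lim g 0 Hv)).
Qed.

Lemma zpart_Rsum_lin K L (a b : nat -> R) (h g : nat -> Z -> R) c :
  c * zpart K (fun n => Rsum L (fun l => a l * h l n + b l * g l n)) =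
  Rsum L (fun l => a l * (c * zpart K (h l)) + b l * (c * zpart K (g l))).
Proof.
  induction L as [|l L IH]; simpl; [rewrite zpart_zero; ring|].
  rewrite zpart_plus, Rmult_plus_distr_l, IH, zpart_plus, !zpart_scal. ring.
Qed.

Lemma lim_Rsum L (F : nat -> nat -> R) (c : nat -> R) :
  (forall l, In l L -> is_lim_seq (F l) (c l)) ->
  is_lim_seq (fun K => Rsum L (fun l => F l K)) (Rsum L c).
Proof.
  induction L as [|a L IH]; intros H; simpl; [apply is_lim_seq_const|].
  apply is_lim_seq_plus'; [apply H; left; auto|apply IH; intros; apply H; right; auto].
Qed.

Lemma Re_Csum_lin L (a b : nat -> C) (x y : nat -> R) :
  Re (Csum L (fun l => Cplus (Cmult (a l) (RtoC (x l))) (Cmult (b l) (RtoC (y l))))) =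
  Rsum L (fun l => Re (a l) * x l + Re (b l) * y l).
Proof. induction L; simpl; [reflexivity|]. rewrite <- IHL. unfold Re; simpl. ring. Qed.

Lemma Im_Csum_lin L (a b : nat -> C) (x y : nat -> R) :
  Im (Csum L (fun l => Cplus (Cmult (a l) (RtoC (x l))) (Cmult (b l) (RtoC (y l))))) =
  Rsum L (fun l => Im (a l) * x l + Im (b l) * y l).
Proof. induction L; simpl; [reflexivity|]. rewrite <- IHL. unfold Im; simpl. ring. Qed.

Lemma lim_scaled_zpart_lin L (a b : nat -> R) (h g : nat -> Z -> R) (X Y : nat -> R) c :
  (forall l, In l L -> is_lim_seq (fun K => c * zpart K (h l)) (X l)) ->
  (forall l, In l L -> is_lim_seq (fun K => c * zpart K (g l)) (Y l)) ->
  is_lim_seq (fun K => c * zpart K (fun n => Rsum L (fun l => a l * h l n + b l * g l n)))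
    (Rsum L (fun l => a l * X l + b l * Y l)).
Proof.
  intros HX HY.
  apply (is_lim_seq_ext (fun K => Rsum L (fun l => a l * (c * zpart K (h l)) + b l * (c * zpart K (g l))))).
  - intros K. symmetry. apply zpart_Rsum_lin.
  - apply lim_Rsum. intros l Hl. apply is_lim_seq_plus'.
    + apply (is_lim_seq_scal_l _ _ (X l)). auto.
    + apply (is_lim_seq_scal_l _ _ (Y l)). auto.
Qed.

Lemma lim_zpart_complex_lin L (a b : nat -> C) (f : Z -> R) (h g : nat -> Z -> R) (X Y : nat -> R) c :
  let S := Csum L (fun l => Cplus (Cmult (a l) (RtoC (X l))) (Cmult (b l) (RtoC (Y l)))) in
  (forall n, RtoC (f n) =
     Csum L (fun l => Cplus (Cmult (a l) (RtoC (h l n))) (Cmult (b l) (RtoC (g l n))))) ->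
  (forall l, In l L -> is_lim_seq (fun K => c * zpart K (h l)) (X l)) ->
  (forall l, In l L -> is_lim_seq (fun K => c * zpart K (g l)) (Y l)) ->
  is_lim_seq (fun K => c * zpart K f) (Re S) /\ RtoC (Re S) = S.
Proof.
  intros S Hf HX HY. unfold S. split.
  - rewrite Re_Csum_lin. eapply is_lim_seq_ext; [|exact (lim_scaled_zpart_lin L _ _ h g X Y c HX HY)].
    intros K. cbv beta. f_equal. apply zpart_ext. intros n.
    rewrite <- Re_Csum_lin, <- Hf. reflexivity.
  - (* [f] is real, so the imaginary parts of the combination sum to zero. *)
    apply injective_projections; [reflexivity|].
    change (0 = Im (Csum L (fun l => Cplus (Cmult (a l) (RtoC (X l))) (Cmult (b l) (RtoC (Y l)))))).
    rewrite Im_Csum_lin.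
    pose proof (lim_scaled_zpart_lin L (fun l => Im (a l)) (fun l => Im (b l)) h g X Y c HX HY) as Him.
    apply is_lim_seq_unique in Him.
    rewrite (Lim_seq_ext _ (fun _ => 0)), Lim_seq_const in Him; [injection Him; auto|].
    intros K. rewrite (zpart_ext K _ (fun _ => 0)), zpart_zero; [ring|].
    intros n. rewrite <- Im_Csum_lin, <- Hf. reflexivity.
Qed.

(** * The sum of a / (n^2 + a^2) over Z *)

Lemma Derive_n_exp_scal a n t : Derive_n (fun y => exp (a * y)) n t = a ^ n * exp (a * t).
Proof.
  revert t; induction n as [|n IH]; intros t; simpl; [ring|].
  rewrite (Derive_ext _ (fun y => a ^ n * exp (a * y))) by apply IH.
  apply is_derive_unique. auto_derive; [exact I|ring].
Qed.

Lemma ex_derive_n_exp_scal a n t : ex_derive_n (fun y => exp (a * y)) n t.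
Proof.
  destruct n; [exact I|]. simpl.
  apply (ex_derive_ext (fun y => a ^ n * exp (a * y))).
  - intros y. symmetry. apply Derive_n_exp_scal.
  - auto_derive. exact I.
Qed.

Lemma exp_taylor3 a x : (a = 1 \/ a = -1) -> 0 < x <= 1 ->
  0 <= exp (a * x) - (1 + a * x + x ^ 2 / 2 + a * x ^ 3 / 6) <= x ^ 4 / 8.
Proof.
  intros Ha Hx.
  destruct (Taylor_Lagrange (fun y => exp (a * y)) 3 0 x) as [z [Hz Heq]]; [lra|..].
  { intros; apply ex_derive_n_exp_scal. }
  rewrite Heq. cbn [sum_f_R0]. rewrite !Derive_n_exp_scal, Rmult_0_r, exp_0, !Rminus_0_r.
  replace (INR (fact 0)) with 1 by reflexivity.
  replace (INR (fact 1)) with 1 by reflexivity.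
  replace (INR (fact 2)) with 2 by (simpl; ring).
  replace (INR (fact 3)) with 6 by (simpl; ring).
  replace (INR (fact 4)) with 24 by (simpl; ring).
  assert (Hez : 0 < exp (a * z) <= 3).
  { split; [apply exp_pos|]. apply Rle_trans with (exp 1); [|apply exp_le_3].
    destruct Ha; subst a; apply Rlt_le, exp_increasing; lra. }
  assert (0 < x ^ 4) by (apply pow_lt; lra).
  destruct Ha; subst a; simpl pow; nra.
Qed.

Lemma sinh_taylor_bounds X : 0 < X <= 1 -> 0 <= exp X - exp (- X) - 2 * X <= 2 * X ^ 3.
Proof.
  intros HX.
  pose proof (exp_taylor3 1 X (or_introl eq_refl) HX) as Hp.
  pose proof (exp_taylor3 (-1) X (or_intror eq_refl) HX) as Hm.
  rewrite Rmult_1_l in Hp. replace (-1 * X) with (- X) in Hm by ring.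
  assert (X ^ 4 <= X ^ 3) by (simpl; nra).
  assert (0 < X ^ 3) by (apply pow_lt; lra).
  lra.
Qed.

Lemma cosh_taylor_bounds X : 0 < X <= 1 -> 0 <= exp X + exp (- X) - 2 - X ^ 2 <= X ^ 4.
Proof.
  intros HX.
  pose proof (exp_taylor3 1 X (or_introl eq_refl) HX) as Hp.
  pose proof (exp_taylor3 (-1) X (or_intror eq_refl) HX) as Hm.
  rewrite Rmult_1_l in Hp. replace (-1 * X) with (- X) in Hm by ring.
  lra.
Qed.

Lemma one_minus_cos_bounds y : Rabs y <= PI ->
  2 - 2 * cos y <= y ^ 2 /\ y ^ 2 - y ^ 4 / 12 <= 2 - 2 * cos y /\ y ^ 2 / 9 <= 2 - 2 * cos y.
Proof.
  intros Hy. set (a := Rabs y / 2).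
  assert (Hcos : cos y = 1 - 2 * (sin a * sin a)).
  { replace (1 - 2 * (sin a * sin a)) with (cos (2 * a)) by (rewrite cos_2a_sin; ring).
    unfold a. destruct (Rle_dec 0 y).
    - rewrite Rabs_right by lra. f_equal; field.
    - rewrite Rabs_left by lra. rewrite <- cos_neg. f_equal; field. }
  assert (Ha : 0 <= a <= 2) by (unfold a; pose proof PI_4; pose proof (Rabs_pos y); lra).
  assert (Hya : y ^ 2 = 4 * a ^ 2) by (unfold a; rewrite <- (pow2_abs y); field).
  assert (Hsl : a - a ^ 3 / 6 <= sin a).
  { pose proof (pre_sin_bound a 0 ltac:(lra) ltac:(lra)) as [Hl _].
    unfold sin_approx, sin_term, Factorial.fact in Hl; simpl in Hl.
    eapply Rle_trans; [|exact Hl]; right; field. }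
  assert (Hsu : sin a <= a).
  { destruct (Req_dec a 0) as [->|Ha0]; [rewrite sin_0; lra|]. left; apply sin_lt_x; lra. }
  assert (H3 : a / 3 <= a - a ^ 3 / 6) by (simpl; nra).
  assert (Hsq1 : sin a * sin a <= a * a) by nra.
  assert (Hsq2 : (a - a ^ 3 / 6) * (a - a ^ 3 / 6) <= sin a * sin a) by nra.
  assert (H6 : 0 <= a ^ 6) by (apply pow_le; lra).
  assert (Hy4 : y ^ 4 = 16 * a ^ 4) by (replace (y ^ 4) with ((y ^ 2) ^ 2) by ring; rewrite Hya; ring).
  rewrite Hcos, Hy4, Hya. simpl in *. nra.
Qed.

Lemma lorentz_ratio_approx X Y S C cY : 0 < X <= 1 ->
  0 <= S - 2 * X <= 2 * X ^ 3 -> 0 <= C - X ^ 2 <= X ^ 4 ->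
  cY <= Y ^ 2 -> Y ^ 2 - Y ^ 4 / 12 <= cY -> Y ^ 2 / 9 <= cY ->
  Rabs (S / (C + cY) - 2 * X / (X ^ 2 + Y ^ 2)) <= 45 * X.
Proof.
  intros HX HS HC H1 H2 H3.
  set (Q := X ^ 2 + Y ^ 2). set (D := C + cY).
  assert (HX2 : 0 < X ^ 2) by (apply pow_lt; lra).
  assert (HY2 : 0 <= Y ^ 2) by apply pow2_ge_0.
  assert (HQ : 0 < Q) by (unfold Q; lra).
  assert (HD : Q / 9 <= D) by (unfold D, Q; lra).
  assert (HN : Rabs (S * Q - 2 * X * D) <= 5 * X * Q ^ 2).
  { replace (S * Q - 2 * X * D)
      with ((S - 2 * X) * Q - 2 * X * (C - X ^ 2) - 2 * X * (cY - Y ^ 2)) by (unfold D, Q; ring).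
    assert (X ^ 4 <= Q ^ 2 /\ Y ^ 4 <= Q ^ 2) as [HXQ HYQ] by (unfold Q; simpl; split; nra).
    assert (X ^ 3 * Q <= X * Q ^ 2) by (unfold Q; simpl; nra).
    assert (0 <= X * (C - X ^ 2) <= X * Q ^ 2) by (split; nra).
    assert (0 <= X * (Y ^ 2 - cY) <= X * (Q ^ 2 / 12)) by (split; nra).
    assert (0 <= (S - 2 * X) * Q <= 2 * X * Q ^ 2) by (split; nra).
    apply Rabs_le. lra. }
  replace (S / D - 2 * X / Q) with ((S * Q - 2 * X * D) / (D * Q)) by (field; lra).
  rewrite Rabs_div, (Rabs_right (D * Q)) by nra.
  apply Rle_div_l; [nra|].
  assert (0 < Q ^ 2) by (apply pow_lt; lra).
  assert (Q ^ 2 / 9 <= D * Q) by (simpl; nra).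
  nra.
Qed.

Lemma sinh_cosh_kernel_approx X Y : 0 < X <= 1 -> Rabs Y <= PI ->
  Rabs ((exp X - exp (- X)) / (exp X + exp (- X) - 2 * cos Y) - 2 * X / (X ^ 2 + Y ^ 2))
  <= 45 * X.
Proof.
  intros HX HY.
  pose proof (sinh_taylor_bounds X HX). pose proof (cosh_taylor_bounds X HX).
  destruct (one_minus_cos_bounds Y HY) as [H1 [H2 H3]].
  replace (exp X + exp (- X) - 2 * cos Y) with ((exp X + exp (- X) - 2) + (2 - 2 * cos Y)) by ring.
  apply lorentz_ratio_approx; lra.
Qed.

(* The closed form of [sum_(n in Z) b / ((s + n)^2 + b^2)]; only its duplication identity
   and its behaviour for small [s] and [b] are used. *)
Definition lorentz_periodic (s b : R) : R :=
  PI * (exp (2 * PI * b) - exp (- (2 * PI * b))) /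
  (exp (2 * PI * b) + exp (- (2 * PI * b)) - 2 * cos (2 * PI * s)).

Lemma lorentz_periodic_scaled_approx h a n : 0 < h -> 0 < a -> 2 * PI * a * h <= 1 ->
  Rabs (IZR n) * h <= / 2 ->
  Rabs (h * lorentz_periodic (IZR n * h) (a * h) - a / (IZR n ^ 2 + a ^ 2))
  <= 45 * PI * (2 * PI * a * h) * h.
Proof.
  intros Hh Ha HX Hn. pose proof PI_RGT_0.
  set (X := 2 * PI * a * h). set (Y := 2 * PI * IZR n * h).
  assert (HY : Rabs Y <= PI).
  { unfold Y. rewrite !Rabs_mult, (Rabs_right 2), (Rabs_right PI), (Rabs_right h) by lra. nra. }
  assert (HX0 : 0 < X) by (unfold X; apply Rmult_lt_0_compat; [apply Rmult_lt_0_compat|]; nra).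
  assert (Hn2 : 0 <= IZR n ^ 2) by apply pow2_ge_0.
  replace (h * lorentz_periodic (IZR n * h) (a * h) - a / (IZR n ^ 2 + a ^ 2)) with
    ((h * PI) * ((exp X - exp (- X)) / (exp X + exp (- X) - 2 * cos Y) - 2 * X / (X ^ 2 + Y ^ 2))).
  - rewrite Rabs_mult, (Rabs_right (h * PI)) by nra.
    replace (45 * PI * X * h) with ((h * PI) * (45 * X)) by ring.
    apply Rmult_le_compat_l; [nra|]. apply sinh_cosh_kernel_approx; [split; [exact HX0|exact HX]|exact HY].
  - unfold lorentz_periodic, X, Y.
    replace (2 * PI * (a * h)) with (2 * PI * a * h) by ring.
    replace (2 * PI * (IZR n * h)) with (2 * PI * IZR n * h) by ring.
    assert (Hc := COS_bound (2 * PI * IZR n * h)).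
    assert (Hch := cosh_taylor_bounds (2 * PI * a * h) (conj HX0 HX)).
    assert (0 < (2 * PI * a * h) ^ 2) by (apply pow_lt; exact HX0).
    field. split; [nra|]. split; [lra|nra].
Qed.

Lemma lorentz_periodic_duplication s b : 0 < b ->
  lorentz_periodic (s / 2) (b / 2) + lorentz_periodic ((s + 1) / 2) (b / 2) =
  2 * lorentz_periodic s b.
Proof.
  intros Hb. unfold lorentz_periodic.
  replace (2 * PI * (b / 2)) with (PI * b) by field.
  replace (2 * PI * (s / 2)) with (PI * s) by field.
  replace (2 * PI * ((s + 1) / 2)) with (PI * s + PI) by field.
  replace (2 * PI * b) with (PI * b + PI * b) by ring.
  replace (2 * PI * s) with (2 * (PI * s)) by ring.
  rewrite cos_2a_cos, neg_cos, !exp_Ropp, exp_plus.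
  set (p := exp (PI * b)). set (c := cos (PI * s)).
  assert (Hp : 1 < p).
  { unfold p. rewrite <- exp_0. apply exp_increasing, Rmult_lt_0_compat; [apply PI_RGT_0|lra]. }
  assert (Hc : -1 <= c <= 1) by apply COS_bound.
  assert (Hm : 0 < p * p + 1 - 2 * c * p) by nra.
  assert (Hq : 0 < p * p + 1 + 2 * c * p) by nra.
  assert (0 < (p * p + 1 - 2 * c * p) * (p * p + 1 + 2 * c * p)) by (apply Rmult_lt_0_compat; lra).
  field. repeat split; apply Rgt_not_eq; nra.
Qed.

Lemma lorentz_periodic_dyadic_sum k t b : 0 < b ->
  sum_lt (2 ^ k) (fun j => lorentz_periodic ((t + INR j) / 2 ^ k) (b / 2 ^ k)) =
  2 ^ k * lorentz_periodic t b.
Proof.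
  revert t b. induction k as [|k IH]; intros t b Hb.
  - simpl. rewrite Rplus_0_r, !Rdiv_1_r, Rplus_0_l. ring.
  - replace (2 ^ S k)%nat with (2 ^ k + 2 ^ k)%nat by (simpl; lia).
    rewrite sum_lt_add, <- sum_lt_plus.
    assert (H2k : 0 < 2 ^ k) by (apply pow_lt; lra).
    rewrite (sum_lt_ext _ _ (fun j => 2 * lorentz_periodic ((t + INR j) / 2 ^ k) (b / 2 ^ k))).
    + rewrite sum_lt_scal, IH by lra. simpl. ring.
    + intros j Hj. rewrite <- lorentz_periodic_duplication by (apply Rdiv_lt_0_compat; lra).
      rewrite plus_INR, pow_INR. replace (INR 2) with 2 by reflexivity.
      replace (2 ^ S k) with (2 * 2 ^ k) by reflexivity.
      f_equal; f_equal; field; lra.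
Qed.

Lemma lorentz_periodic_shift_int N b : lorentz_periodic (- INR N) b = lorentz_periodic 0 b.
Proof.
  unfold lorentz_periodic.
  replace (2 * PI * - INR N) with (- (0 + 2 * INR N * PI)) by ring.
  rewrite cos_neg, cos_period, Rmult_0_r. reflexivity.
Qed.

Lemma zpart_scaled_lorentz_periodic k a : 0 < a ->
  let h := / (2 * INR (2 ^ k)) in
  zpart (2 ^ k) (fun n => h * lorentz_periodic (IZR n * h) (a * h)) = lorentz_periodic 0 a.
Proof.
  intros Ha h. set (N := (2 ^ k)%nat) in *.
  assert (HN : INR N = 2 ^ k) by (unfold N; rewrite pow_INR; reflexivity).
  assert (HN0 : 0 < INR N) by (rewrite HN; apply pow_lt; lra).
  pose proof (lorentz_periodic_dyadic_sum (S k) (- INR N) a Ha) as H.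
  replace (2 ^ S k)%nat with (N + N)%nat in H by (unfold N; simpl; lia).
  replace (2 ^ S k) with (/ h) in H by (unfold h; rewrite HN; simpl; field; lra).
  rewrite lorentz_periodic_shift_int in H.
  rewrite <- zpart_as_sum_lt.
  rewrite (sum_lt_ext _ _ (fun j => h * lorentz_periodic ((- INR N + INR j) / / h) (a / / h))).
  - rewrite sum_lt_scal, H. unfold h. field. lra.
  - intros j Hj. f_equal. unfold Rdiv. rewrite Rinv_inv. f_equal.
    rewrite minus_IZR, <- !INR_IZR_INZ. ring.
Qed.

Lemma zpart_lorentzian_dyadic_error k a : 0 < a -> 4 * a <= INR (2 ^ k) ->
  Rabs (lorentz_periodic 0 a - zpart (2 ^ k) (fun n => a / (IZR n ^ 2 + a ^ 2)))
  <= 45 * PI * PI * a / INR (2 ^ k).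
Proof.
  intros Ha Hk. pose proof PI_RGT_0. pose proof PI_4.
  set (N := (2 ^ k)%nat) in *. set (h := / (2 * INR N)).
  assert (HN0 : 0 < INR N) by lra.
  assert (Hh : 0 < h) by (apply Rinv_0_lt_compat; lra).
  rewrite <- (zpart_scaled_lorentz_periodic k a Ha), <- zpart_minus.
  eapply Rle_trans.
  - apply (zpart_abs_le _ _ (45 * PI * (2 * PI * a * h) * h)). intros n Hn.
    apply lorentz_periodic_scaled_approx; [exact Hh|exact Ha| |].
    + unfold h. replace (2 * PI * a * / (2 * INR N)) with (PI * a / INR N) by (field; lra).
      apply Rle_div_l; nra.
    + assert (Rabs (IZR n) <= INR N) by (rewrite <- abs_IZR, INR_IZR_INZ; apply IZR_le; lia).
      unfold h. apply (Rmult_le_reg_r (2 * INR N)); [lra|].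
      rewrite Rmult_assoc, Rinv_l by lra. field_simplify; lra.
  - right. unfold h. field. lra.
Qed.

Lemma lim_zpart_of_dyadic_bound g V M C : (forall n, 0 <= g n) -> 0 <= C ->
  (forall k, M <= INR (2 ^ k) -> Rabs (V - zpart (2 ^ k) g) <= C / INR (2 ^ k)) ->
  is_lim_seq (fun K => zpart K g) V.
Proof.
  intros Hg HC Hb. apply is_lim_seq_spec. intros eps. pose proof (cond_pos eps) as Heps.
  destruct (INR_unbounded (Rabs M + C / eps)) as [m Hm].
  assert (Hpow : forall j, (m <= j)%nat -> Rabs (V - zpart (2 ^ j) g) < eps).
  { intros j Hj.
    assert (Hmj : INR m <= INR (2 ^ j)).
    { apply le_INR. apply Nat.le_trans with j; [exact Hj|]. apply Nat.lt_le_incl, Nat.pow_gt_lin_r; lia. }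
    assert (0 <= C / eps) by (apply Rdiv_le_0_compat; lra).
    pose proof (Rle_abs M). pose proof (Rabs_pos M).
    eapply Rle_lt_trans; [apply Hb; lra|].
    assert (Hlt : C / eps < INR (2 ^ j)) by lra.
    apply Rlt_div_l; [lra|]. apply Rlt_div_l in Hlt; [nra|lra]. }
  exists (2 ^ m)%nat. intros K HK.
  assert (HKK : (K <= 2 ^ (m + K))%nat).
  { apply Nat.le_trans with (m + K)%nat; [lia|]. apply Nat.lt_le_incl, Nat.pow_gt_lin_r; lia. }
  pose proof (zpart_le_nonneg _ _ g Hg HK). pose proof (zpart_le_nonneg _ _ g Hg HKK).
  pose proof (Hpow m (le_n m)) as H1. pose proof (Hpow (m + K)%nat ltac:(lia)) as H2.
  apply Rabs_def2 in H1. apply Rabs_def2 in H2. apply Rabs_def1; lra.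
Qed.

Lemma lim_zpart_lorentzian a : 0 < a ->
  is_lim_seq (fun K => zpart K (fun n => a / (IZR n ^ 2 + a ^ 2))) (lorentz_periodic 0 a).
Proof.
  intros Ha. apply (lim_zpart_of_dyadic_bound _ _ (4 * a) (45 * PI * PI * a)).
  - intros n. apply Rdiv_le_0_compat; [lra|]. pose proof (pow2_ge_0 (IZR n)). nra.
  - pose proof PI_RGT_0. apply Rmult_le_pos; [nra|lra].
  - intros k Hk. apply zpart_lorentzian_dyadic_error; assumption.
Qed.

(** * Matsubara sums *)

Lemma Rabs_div_le_inv c d y : y <> 0 -> 0 < d -> Rabs c * Rabs y <= d -> Rabs (c / d) <= / Rabs y.
Proof.
  intros Hy Hd Hc. assert (Hay : 0 < Rabs y) by (apply Rabs_pos_lt; exact Hy).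
  rewrite Rabs_div, (Rabs_right d) by lra.
  apply Rle_div_l; [exact Hd|].
  apply (Rmult_le_reg_l (Rabs y)); [exact Hay|].
  rewrite <- Rmult_assoc, Rinv_r, Rmult_1_l by lra. lra.
Qed.

Lemma lorentz_periodic_coth T E : 0 < T -> 0 < E ->
  lorentz_periodic 0 (E / (2 * PI * T)) = PI * (1 + 2 * nB T E).
Proof.
  intros HT HE. pose proof PI_RGT_0. unfold lorentz_periodic, nB.
  rewrite Rmult_0_r, cos_0, exp_Ropp.
  replace (2 * PI * (E / (2 * PI * T))) with (E / T) by (field; lra).
  assert (He : 1 < exp (E / T)).
  { rewrite <- exp_0. apply exp_increasing, Rdiv_lt_0_compat; lra. }
  assert (exp (E / T) + / exp (E / T) - 2 * 1 = (exp (E / T) - 1) ^ 2 / exp (E / T)) as -> by (field; lra).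
  field. lra.
Qed.

Lemma lorentzian_vanishing a : 0 < a -> vanishing (fun n => a / (IZR n ^ 2 + a ^ 2)).
Proof.
  intros Ha. apply (vanishing_of_inv_bound _ 1); [lra|]. intros n Hn.
  rewrite Rdiv_1_l. apply Rabs_div_le_inv; [apply not_0_IZR, Hn| |].
  - assert (0 < a ^ 2) by (apply pow_lt; lra). pose proof (pow2_ge_0 (IZR n)). lra.
  - rewrite (Rabs_right a), <- (pow2_abs (IZR n)) by lra.
    pose proof (pow2_ge_0 (Rabs (IZR n) - a)). nra.
Qed.

Lemma dispersive_vanishing kappa E : 0 < kappa -> 0 < E ->
  vanishing (fun n => kappa * IZR n / ((kappa * IZR n) ^ 2 + E ^ 2)).
Proof.
  intros Hk HE. apply (vanishing_of_inv_bound _ (/ kappa)); [apply Rinv_0_lt_compat, Hk|].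
  intros n Hn. assert (Hn0 : IZR n <> 0) by (apply not_0_IZR, Hn).
  replace (/ kappa / Rabs (IZR n)) with (/ Rabs (kappa * IZR n)).
  2: { rewrite Rabs_mult, (Rabs_right kappa) by lra. field. split; [lra|apply Rabs_no_R0, Hn0]. }
  apply Rabs_div_le_inv; [apply Rmult_integral_contrapositive; split; [lra|exact Hn0]| |].
  - assert (0 < E ^ 2) by (apply pow_lt; lra). pose proof (pow2_ge_0 (kappa * IZR n)). lra.
  - rewrite <- (pow2_abs (kappa * IZR n)). pose proof (pow2_ge_0 E). simpl; nra.
Qed.

Lemma lim_matsubara_lorentzian T E u m : 0 < T -> 0 < E -> u = 2 * PI * T * IZR m ->
  is_lim_seq (fun K => T * zpart K (fun n => E / ((2 * PI * T * IZR n + u) ^ 2 + E ^ 2)))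
    ((1 + 2 * nB T E) / 2).
Proof.
  intros HT HE Hu. pose proof PI_RGT_0.
  set (a := E / (2 * PI * T)).
  assert (Ha : 0 < a) by (apply Rdiv_lt_0_compat; [lra|]; apply Rmult_lt_0_compat; lra).
  apply (is_lim_seq_ext (fun K => / (2 * PI) * zpart K (fun n => a / (IZR (n + m) ^ 2 + a ^ 2)))).
  { intros K. rewrite <- !zpart_scal. apply zpart_ext. intros n. unfold a.
    rewrite Hu, plus_IZR.
    assert (0 <= (2 * PI * T * (IZR n + IZR m)) ^ 2) by apply pow2_ge_0.
    assert (0 <= (IZR n + IZR m) ^ 2) by apply pow2_ge_0.
    field. repeat split; try lra; apply Rgt_not_eq; nra. }
  replace ((1 + 2 * nB T E) / 2) with (/ (2 * PI) * lorentz_periodic 0 a)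
    by (unfold a; rewrite lorentz_periodic_coth by lra; field; lra).
  apply (is_lim_seq_scal_l _ _ (lorentz_periodic 0 a)).
  apply (lim_zpart_shift (fun n => a / (IZR n ^ 2 + a ^ 2)));
    [apply lorentzian_vanishing, Ha|apply lim_zpart_lorentzian, Ha].
Qed.

Lemma lim_matsubara_odd T E u m : 0 < T -> 0 < E -> u = 2 * PI * T * IZR m ->
  is_lim_seq (fun K => T * zpart K (fun n =>
    (2 * PI * T * IZR n + u) / ((2 * PI * T * IZR n + u) ^ 2 + E ^ 2))) 0.
Proof.
  intros HT HE Hu. pose proof PI_RGT_0.
  set (kappa := 2 * PI * T). assert (Hk : 0 < kappa) by (unfold kappa; nra).
  set (g := fun n : Z => kappa * IZR n / ((kappa * IZR n) ^ 2 + E ^ 2)).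
  assert (Hv : vanishing g) by (apply dispersive_vanishing; assumption).
  replace (Finite 0) with (Finite (T * 0)) by (f_equal; ring).
  apply (is_lim_seq_scal_l _ T 0).
  apply (is_lim_seq_ext (fun K => zpart K (fun n => g (n + m)%Z))).
  - intros K. apply zpart_ext. intros n. unfold g, kappa. rewrite Hu, plus_IZR.
    replace (2 * PI * T * (IZR n + IZR m)) with (2 * PI * T * IZR n + 2 * PI * T * IZR m) by ring.
    reflexivity.
  - apply lim_zpart_shift; [exact Hv|]. apply lim_zpart_odd; [|exact Hv].
    intros n. unfold g. rewrite opp_IZR.
    assert (0 < E ^ 2) by (apply pow_lt; lra). pose proof (pow2_ge_0 (kappa * IZR n)).
    field. apply Rgt_not_eq. nra.
Qed.

(** * Partial fractions *)

Definition filter_neq (l : nat) (L : list nat) : list nat :=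
  filter (fun j => negb (Nat.eqb j l)) L.

Lemma In_filter_neq j l L : In j (filter_neq l L) <-> In j L /\ j <> l.
Proof. unfold filter_neq. rewrite filter_In. destruct (Nat.eqb_spec j l); simpl; intuition. Qed.

Lemma filter_neq_notin l L : ~ In l L -> filter_neq l L = L.
Proof.
  intros H. apply forallb_filter_id, forallb_forall. intros j Hj.
  destruct (Nat.eqb_spec j l); [subst; contradiction|reflexivity].
Qed.

Lemma length_filter_neq l L : NoDup L -> In l L -> length (filter_neq l L) = (length L - 1)%nat.
Proof.
  induction L as [|a L IH]; intros HN Hl; [destruct Hl|]. inversion HN; subst.
  unfold filter_neq; simpl. destruct (Nat.eqb_spec a l) as [->|Ha].
  - simpl. fold (filter_neq l L). rewrite filter_neq_notin by assumption. lia.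
  - destruct Hl as [|Hl]; [congruence|]. simpl. fold (filter_neq l L). rewrite (IH H2 Hl).
    destruct L; [destruct Hl|]. simpl. lia.
Qed.

Section ComplexLists.
Local Open Scope C_scope.

Lemma Csum_ext_in L f g : (forall j, In j L -> f j = g j) -> Csum L f = Csum L g.
Proof. induction L; simpl; intros H; [reflexivity|]. rewrite H, IHL by auto. reflexivity. Qed.

Lemma Cprod_ext_in L f g : (forall j, In j L -> f j = g j) -> Cprod L f = Cprod L g.
Proof. induction L; simpl; intros H; [reflexivity|]. rewrite H, IHL by auto. reflexivity. Qed.

Lemma Csum_plus L f g : Csum L (fun j => f j + g j) = Csum L f + Csum L g.
Proof. induction L; simpl; [ring|]. rewrite IHL. ring. Qed.

Lemma Csum_scal L c f : Csum L (fun j => c * f j) = c * Csum L f.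
Proof. induction L; simpl; [ring|]. rewrite IHL. ring. Qed.

Lemma Csum_opp L f : Csum L (fun j => - f j) = - Csum L f.
Proof. induction L; simpl; [ring|]. rewrite IHL. ring. Qed.

Lemma Cprod_mult L f g : Cprod L (fun j => f j * g j) = Cprod L f * Cprod L g.
Proof. induction L; simpl; [ring|]. rewrite IHL. ring. Qed.

Lemma Cprod_opp L f : Cprod L (fun j => - f j) = RtoC ((-1) ^ length L)%R * Cprod L f.
Proof.
  induction L; simpl; [ring|]. rewrite IHL, RtoC_mult.
  apply injective_projections; simpl; ring.
Qed.

Lemma Csum_remove L l f : NoDup L -> In l L -> Csum L f = f l + Csum (filter_neq l L) f.
Proof.
  induction L as [|a L IH]; intros HN Hl; [destruct Hl|]. inversion HN; subst.
  unfold filter_neq; simpl. fold (filter_neq l L). destruct (Nat.eqb_spec a l) as [->|Ha].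
  - simpl. rewrite filter_neq_notin by assumption. reflexivity.
  - destruct Hl as [|Hl]; [congruence|]. simpl. rewrite (IH H2 Hl). ring.
Qed.

Lemma Cprod_remove L l f : NoDup L -> In l L -> Cprod L f = f l * Cprod (filter_neq l L) f.
Proof.
  induction L as [|a L IH]; intros HN Hl; [destruct Hl|]. inversion HN; subst.
  unfold filter_neq; simpl. fold (filter_neq l L). destruct (Nat.eqb_spec a l) as [->|Ha].
  - simpl. rewrite filter_neq_notin by assumption. reflexivity.
  - destruct Hl as [|Hl]; [congruence|]. simpl. rewrite (IH H2 Hl). ring.
Qed.

Lemma Cprod_if_eq L l A f : NoDup L -> In l L ->
  Cprod L (fun j => if Nat.eqb j l then A else f j) = A * Cprod (filter_neq l L) f.
Proof.
  intros HN Hl. rewrite (Cprod_remove L l) by assumption. rewrite Nat.eqb_refl. f_equal.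
  apply Cprod_ext_in. intros j Hj. apply In_filter_neq in Hj.
  destruct (Nat.eqb_spec j l); [tauto|reflexivity].
Qed.

Lemma Cprod_opp_one L l f g : NoDup L -> In l L ->
  (forall j, In j L -> j <> l -> g j = f j) -> g l = - f l -> Cprod L g = - Cprod L f.
Proof.
  intros HN Hl Hj Hg. rewrite !(Cprod_remove L l), Hg by assumption.
  rewrite (Cprod_ext_in (filter_neq l L) g f); [ring|].
  intros j Hj'. apply In_filter_neq in Hj'. apply Hj; tauto.
Qed.

End ComplexLists.

Definition doubled (L : list nat) : list nat := flat_map (fun j => [2 * j; 2 * j + 1]%nat) L.

Lemma In_doubled q L :
  In q (doubled L) <-> exists j b, In j L /\ q = (2 * j + Nat.b2n b)%nat.
Proof.
  unfold doubled. rewrite in_flat_map. simpl. split.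
  - intros [j [Hj [Hq|[Hq|[]]]]]; exists j; [exists false|exists true]; simpl; split; auto; lia.
  - intros [j [[|] [Hj Hq]]]; exists j; simpl in Hq; split; auto; lia.
Qed.

Lemma NoDup_doubled L : NoDup L -> NoDup (doubled L).
Proof.
  induction L as [|a L IH]; intros HN; simpl; [constructor|]. inversion HN; subst.
  assert (Hout : forall q, In q (doubled L) -> (q <> 2 * a /\ q <> 2 * a + 1)%nat).
  { intros q Hq. apply In_doubled in Hq. destruct Hq as [j [b [Hj Hq]]].
    assert (j <> a) by (intros ->; contradiction). destruct b; simpl in Hq; lia. }
  constructor; [intros [H|H]; [lia|apply Hout in H; lia]|].
  constructor; [intros H; apply Hout in H; lia|]. apply IH; assumption.
Qed.

Section ComplexDoubled.
Local Open Scope C_scope.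

Lemma Cprod_doubled L g : Cprod (doubled L) g = Cprod L (fun j => g (2 * j)%nat * g (2 * j + 1)%nat).
Proof.
  induction L as [|a L IH]; [reflexivity|].
  change (g (2 * a)%nat * (g (2 * a + 1)%nat * Cprod (doubled L) g) =
          g (2 * a)%nat * g (2 * a + 1)%nat * Cprod L (fun j => g (2 * j)%nat * g (2 * j + 1)%nat)).
  rewrite IH. ring.
Qed.

Lemma Csum_doubled L g : Csum (doubled L) g = Csum L (fun j => g (2 * j)%nat + g (2 * j + 1)%nat).
Proof.
  induction L as [|a L IH]; [reflexivity|].
  change (g (2 * a)%nat + (g (2 * a + 1)%nat + Csum (doubled L) g) =
          g (2 * a)%nat + g (2 * a + 1)%nat + Csum L (fun j => g (2 * j)%nat + g (2 * j + 1)%nat)).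
  rewrite IH. ring.
Qed.

End ComplexDoubled.

Section PartialFractions.
Local Open Scope C_scope.
Variable z : nat -> C.

Definition pf_coef (ks : list nat) (k : nat) : C :=
  Cprod ks (fun j => if Nat.eqb j k then 1 else / (z k - z j)).

Definition injective_on (ks : list nat) : Prop :=
  forall a b, In a ks -> In b ks -> a <> b -> z a <> z b.

Lemma injective_on_cons w ks : injective_on (w :: ks) -> injective_on ks.
Proof. intros Hz a b Ha Hb. apply Hz; right; assumption. Qed.

Lemma pf_coef_cons_other w ks k : w <> k -> pf_coef (w :: ks) k = / (z k - z w) * pf_coef ks k.
Proof. intros Hwk. unfold pf_coef. simpl. destruct (Nat.eqb_spec w k); [contradiction|reflexivity]. Qed.

Lemma pf_coef_cons_self w ks : ~ In w ks -> pf_coef (w :: ks) w = Cprod ks (fun k => / (z w - z k)).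
Proof.
  intros Hw. unfold pf_coef. simpl. rewrite Nat.eqb_refl, Cmult_1_l.
  apply Cprod_ext_in. intros j Hj. destruct (Nat.eqb_spec j w); [subst; contradiction|reflexivity].
Qed.

Lemma partial_fractions ks x : ks <> [] -> NoDup ks -> injective_on ks ->
  (forall k, In k ks -> x <> z k) ->
  Cprod ks (fun k => / (x - z k)) = Csum ks (fun k => pf_coef ks k / (x - z k)).
Proof.
  destruct ks as [|v ks]; [congruence|]. intros _. revert x v.
  induction ks as [|v ks IH]; intros x w HN Hz Hx.
  - unfold pf_coef. simpl. rewrite Nat.eqb_refl. unfold Cdiv. ring.
  - set (L := v :: ks) in *. inversion HN as [|? ? Hw HNL]; subst.
    assert (HzL := injective_on_cons _ _ Hz).
    assert (Hwk : forall k, In k L -> z w <> z k) by (intros k Hk; apply Hz; [left|right|intros ->]; auto).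
    assert (HxL : forall k, In k L -> x <> z k) by (intros; apply Hx; right; assumption).
    assert (Hxw : x - z w <> 0) by (apply Cminus_eq_contra, Hx; left; reflexivity).
    change (/ (x - z w) * Cprod L (fun k => / (x - z k)) =
            pf_coef (w :: L) w / (x - z w) + Csum L (fun k => pf_coef (w :: L) k / (x - z k))).
    pose proof (IH x v HNL HzL HxL) as IHx. pose proof (IH (z w) v HNL HzL Hwk) as IHw.
    fold L in IHx, IHw. rewrite pf_coef_cons_self, IHx, IHw by assumption.
    rewrite (Csum_ext_in L (fun k => pf_coef (w :: L) k / (x - z k))
      (fun k => / (z k - z w) * pf_coef L k / (x - z k)))
      by (intros k Hk; rewrite pf_coef_cons_other; [reflexivity|intros ->; contradiction]).
    replace (Csum L (fun k => pf_coef L k / (z w - z k)) / (x - z w))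
      with (Csum L (fun k => / (x - z w) * (pf_coef L k / (z w - z k))))
      by (rewrite Csum_scal; unfold Cdiv; ring).
    rewrite <- Csum_scal, <- Csum_plus. apply Csum_ext_in. intros k Hk.
    assert (x - z k <> 0) by (apply Cminus_eq_contra, HxL, Hk).
    assert (z w - z k <> 0) by (apply Cminus_eq_contra, Hwk, Hk).
    assert (z k - z w <> 0) by (apply Cminus_eq_contra; intros Heq; apply (Hwk k Hk); auto).
    field. auto.
Qed.

Lemma pf_coef_sum w ks : ks <> [] -> NoDup (w :: ks) -> injective_on (w :: ks) ->
  Csum (w :: ks) (pf_coef (w :: ks)) = 0.
Proof.
  intros Hne HN Hz. inversion HN as [|? ? Hw HNL]; subst.
  assert (Hwk : forall k, In k ks -> z w <> z k) by (intros k Hk; apply Hz; [left|right|intros ->]; auto).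
  change (pf_coef (w :: ks) w + Csum ks (pf_coef (w :: ks)) = 0).
  rewrite pf_coef_cons_self, (partial_fractions ks (z w) Hne HNL (injective_on_cons _ _ Hz) Hwk)
    by assumption.
  rewrite <- Csum_plus.
  transitivity (Csum ks (fun _ => 0)); [|clear; induction ks; simpl; [reflexivity|rewrite IHks; ring]].
  apply Csum_ext_in. intros k Hk. rewrite pf_coef_cons_other by (intros ->; contradiction).
  assert (z w - z k <> 0) by (apply Cminus_eq_contra, Hwk, Hk).
  assert (z k - z w <> 0) by (apply Cminus_eq_contra; intros Heq; apply (Hwk k Hk); auto).
  field. auto.
Qed.

End PartialFractions.

Lemma Rprod_pos L f : (forall j, In j L -> 0 < f j) -> 0 < Rprod L f.
Proof.
  induction L; intros H; simpl; [lra|].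
  apply Rmult_lt_0_compat; [apply H; left; auto|apply IHL; intros; apply H; right; auto].
Qed.

Lemma Rprod_mult L f g : Rprod L (fun j => f j * g j) = Rprod L f * Rprod L g.
Proof. induction L; simpl; [ring|]. rewrite IHL. ring. Qed.

Lemma RtoC_Rprod L f : RtoC (Rprod L f) = Cprod L (fun j => RtoC (f j)).
Proof. induction L; simpl; [reflexivity|]. rewrite RtoC_mult, IHL. reflexivity. Qed.

(** * Residues of the summand of D *)

Lemma In_idx j I : In j (idx I) <-> (1 <= j <= I)%nat.
Proof. unfold idx. rewrite in_seq. lia. Qed.

Lemma NoDup_idx I : NoDup (idx I).
Proof. apply seq_NoDup. Qed.

Lemma length_idx I : length (idx I) = I.
Proof. apply length_seq. Qed.

(* The poles [-u_j + i E_j] and [-u_j - i E_j] of the summand of [Dfull] get indices [2j] and [2j+1]. *)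
Definition pole (p E : nat -> R) (q : nat) : C :=
  (- u p (Nat.div2 q), (if Nat.even q then 1 else -1) * E (Nat.div2 q))%R.

Definition bit_sign (b : bool) : R := if b then -1 else 1.

Lemma pole_bit p E l b : pole p E (2 * l + Nat.b2n b)%nat = (- u p l, bit_sign b * E l)%R.
Proof.
  unfold pole. destruct b; simpl Nat.b2n.
  - rewrite Nat.add_1_r, Nat.div2_succ_double, Nat.even_succ, Nat.odd_mul, Nat.odd_2. reflexivity.
  - rewrite Nat.add_0_r, Nat.div2_double, Nat.even_mul, Nat.even_2. reflexivity.
Qed.

Lemma pole_double p E l : pole p E (2 * l)%nat = (- u p l, E l)%R.
Proof.
  pose proof (pole_bit p E l false) as H. rewrite Nat.add_0_r in H. rewrite H.
  unfold bit_sign. f_equal. ring.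
Qed.

Lemma pole_double_succ p E l : pole p E (2 * l + 1)%nat = (- u p l, - E l)%R.
Proof.
  change (2 * l + 1)%nat with (2 * l + Nat.b2n true)%nat. rewrite pole_bit.
  unfold bit_sign. f_equal. ring.
Qed.

Definition pair_sum (D A B : R) : C :=
  fold_right (fun s acc => Cplus (Cdiv (RtoC s)
      (Cminus (Cminus (Cmult Ci (RtoC D)) (RtoC A)) (RtoC (s * B)))) acc) (RtoC 0) [1; -1].

Lemma d_l_pair_sum I p E l :
  d_l I p E l = Cprod (filter_neq l (idx I)) (fun j => pair_sum (u p j - u p l) (E l) (E j)).
Proof. reflexivity. Qed.

Lemma pair_sum_product D A B : ((D, A - B)%R : C) <> RtoC 0 -> ((D, A + B)%R : C) <> RtoC 0 ->
  Cmult (RtoC (2 * B)) (Cmult (Cinv (D, A - B)%R) (Cinv (D, A + B)%R)) = Copp (pair_sum D A B).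
Proof.
  intros H1 H2. unfold pair_sum. simpl fold_right.
  assert (E1 : Cminus (Cminus (Cmult Ci (RtoC D)) (RtoC A)) (RtoC (1 * B)) = Cmult Ci (D, A + B)%R)
    by (apply injective_projections; simpl; ring).
  assert (E2 : Cminus (Cminus (Cmult Ci (RtoC D)) (RtoC A)) (RtoC (-1 * B)) = Cmult Ci (D, A - B)%R)
    by (apply injective_projections; simpl; ring).
  rewrite E1, E2.
  assert (W1 : ((D, A + B)%R : C) = Cplus (RtoC D) (Cmult Ci (Cplus (RtoC A) (RtoC B))))
    by (apply injective_projections; simpl; ring).
  assert (W2 : ((D, A - B)%R : C) = Cplus (RtoC D) (Cmult Ci (Cminus (RtoC A) (RtoC B))))
    by (apply injective_projections; simpl; ring).
  rewrite W1, W2 in *. rewrite RtoC_mult.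
  pose proof Ci_nz. field. auto.
Qed.

Section Residues.
Variables (I : nat) (p E : nat -> R).
Hypothesis HE : forall j, (1 <= j <= I)%nat -> 0 < E j.
Hypothesis HD : forall j l, (1 <= j <= I)%nat -> (1 <= l <= I)%nat -> j <> l ->
  forall s s' : R, (s = 1 \/ s = -1) -> (s' = 1 \/ s' = -1) ->
    Cplus (Cplus (Cmult Ci (RtoC (u p j - u p l))) (RtoC (s * E l))) (RtoC (s' * E j)) <> RtoC 0.

Lemma poles_injective : injective_on (pole p E) (doubled (idx I)).
Proof.
  intros q q' Hq Hq' Hne Heq.
  apply In_doubled in Hq as [j [b [Hj ->]]]. apply In_doubled in Hq' as [l [b' [Hl ->]]].
  rewrite !pole_bit in Heq. injection Heq as Hu Hs.
  apply In_idx in Hj, Hl. pose proof (HE j Hj). pose proof (HE l Hl).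
  destruct (Nat.eq_dec j l) as [<-|Hjl].
  - destruct b, b'; unfold bit_sign in Hs; simpl in Hne; lra || lia.
  - apply (HD j l Hj Hl Hjl (- bit_sign b') (bit_sign b)).
    + destruct b'; unfold bit_sign; [left|right]; ring.
    + destruct b; unfold bit_sign; auto.
    + apply injective_projections; simpl; lra.
Qed.

Definition residue (q : nat) : C :=
  Cmult (Cprod (idx I) (fun j => RtoC (2 * E j))) (pf_coef (pole p E) (doubled (idx I)) q).

Lemma residue_diagonal_factor l b : 0 < E l ->
  Cmult (RtoC (2 * E l))
    (Cmult (if Nat.eqb (2 * l) (2 * l + Nat.b2n b) then RtoC 1
            else Cinv (Cminus (pole p E (2 * l + Nat.b2n b)) (pole p E (2 * l))))
           (if Nat.eqb (2 * l + 1) (2 * l + Nat.b2n b) then RtoC 1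
            else Cinv (Cminus (pole p E (2 * l + Nat.b2n b)) (pole p E (2 * l + 1)))))
  = if b then Ci else Copp Ci.
Proof.
  intros HEl. destruct b; simpl Nat.b2n;
    [rewrite Nat.eqb_refl, (proj2 (Nat.eqb_neq _ _)) by lia
    |rewrite Nat.add_0_r, Nat.eqb_refl, (proj2 (Nat.eqb_neq _ _)) by lia];
    rewrite ?Nat.add_0_r, ?pole_double, ?pole_double_succ;
    apply injective_projections; simpl; field; nra.
Qed.

Lemma residue_offdiagonal_factor l j b : In l (idx I) -> In j (idx I) -> j <> l ->
  Cmult (RtoC (2 * E j))
    (Cmult (if Nat.eqb (2 * j) (2 * l + Nat.b2n b) then RtoC 1
            else Cinv (Cminus (pole p E (2 * l + Nat.b2n b)) (pole p E (2 * j))))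
           (if Nat.eqb (2 * j + 1) (2 * l + Nat.b2n b) then RtoC 1
            else Cinv (Cminus (pole p E (2 * l + Nat.b2n b)) (pole p E (2 * j + 1)))))
  = Copp (pair_sum (u p j - u p l) (bit_sign b * E l) (E j)).
Proof.
  intros Hl Hj Hjl.
  assert (Hz : forall q, In q (doubled (idx I)) -> q <> (2 * l + Nat.b2n b)%nat ->
            Cminus (pole p E (2 * l + Nat.b2n b)) (pole p E q) <> RtoC 0).
  { intros q Hq Hne. apply Cminus_eq_contra, poles_injective; [|exact Hq|auto].
    apply In_doubled. exists l, b. auto. }
  assert (Hb : (Nat.b2n b <= 1)%nat) by (destruct b; simpl; lia).
  replace (Nat.eqb (2 * j) (2 * l + Nat.b2n b)) with false by (symmetry; apply Nat.eqb_neq; lia).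
  replace (Nat.eqb (2 * j + 1) (2 * l + Nat.b2n b)) with false by (symmetry; apply Nat.eqb_neq; lia).
  pose proof (Hz (2 * j)%nat) as Hz0. pose proof (Hz (2 * j + 1)%nat) as Hz1.
  rewrite pole_bit, pole_double, pole_double_succ in *.
  replace (Cminus (- u p l, bit_sign b * E l)%R (- u p j, E j)%R)
    with ((u p j - u p l, bit_sign b * E l - E j)%R : C) in * by (apply injective_projections; simpl; ring).
  replace (Cminus (- u p l, bit_sign b * E l)%R (- u p j, - E j)%R)
    with ((u p j - u p l, bit_sign b * E l + E j)%R : C) in * by (apply injective_projections; simpl; ring).
  apply pair_sum_product.
  - apply Hz0; [apply In_doubled; exists j, false; split; [exact Hj|simpl; lia]|lia].
  - apply Hz1; [apply In_doubled; exists j, true; split; [exact Hj|simpl; lia]|lia].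
Qed.

Lemma residue_bit l b : In l (idx I) ->
  residue (2 * l + Nat.b2n b) =
  Cmult (Cmult (if b then Ci else Copp Ci) (RtoC ((-1) ^ (I - 1))))
    (Cprod (filter_neq l (idx I)) (fun j => pair_sum (u p j - u p l) (bit_sign b * E l) (E j))).
Proof.
  intros Hl. unfold residue, pf_coef. rewrite Cprod_doubled, <- Cprod_mult.
  rewrite (Cprod_ext_in _ _ (fun j => if Nat.eqb j l then (if b then Ci else Copp Ci)
             else Copp (pair_sum (u p j - u p l) (bit_sign b * E l) (E j)))).
  - rewrite Cprod_if_eq, Cprod_opp, length_filter_neq, length_idx by (auto using NoDup_idx). ring.
  - intros j Hj. destruct (Nat.eqb_spec j l) as [->|Hjl].
    + apply residue_diagonal_factor, HE, In_idx, Hl.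
    + apply residue_offdiagonal_factor; assumption.
Qed.

End Residues.

(** * Reflections *)

Lemma flip_at j E : flip j E j = - E j.
Proof. unfold flip. rewrite Nat.eqb_refl. reflexivity. Qed.

Lemma flip_other j k E : k <> j -> flip j E k = E k.
Proof. intros H. unfold flip. destruct (Nat.eqb_spec k j); [contradiction|reflexivity]. Qed.

Lemma flip_comm i j E : i <> j -> flip i (flip j E) = flip j (flip i E).
Proof.
  intros H. apply functional_extensionality. intros k. unfold flip.
  destruct (Nat.eqb_spec k i), (Nat.eqb_spec k j); subst; congruence.
Qed.

Lemma d_l_flip_other I p E k l : In l (idx I) -> k <> l -> d_l I p (flip l E) k = Copp (d_l I p E k).
Proof.
  intros Hl Hkl. rewrite !d_l_pair_sum. apply Cprod_opp_one with l.
  - apply NoDup_filter, NoDup_idx.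
  - apply In_filter_neq. auto.
  - intros j Hj Hjl. rewrite !flip_other by (apply In_filter_neq in Hj; tauto). reflexivity.
  - rewrite flip_at, flip_other by auto. unfold pair_sum. simpl fold_right.
    replace (RtoC (1 * - E l)) with (RtoC (-1 * E l)) by (f_equal; ring).
    replace (RtoC (-1 * - E l)) with (RtoC (1 * E l)) by (f_equal; ring).
    unfold Cdiv. ring.
Qed.

Lemma onePlusS_D0 I p E l : In l (idx I) ->
  onePlusS l (D0 I p) E =
  Cmult (RtoC ((-1) ^ (I + 1))) (Cplus (d_l I p E l) (d_l I p (flip l E) l)).
Proof.
  intros Hl. unfold onePlusS, Sop, D0.
  rewrite !(Csum_remove (idx I) l) by (auto using NoDup_idx).
  rewrite (Csum_ext_in (filter_neq l (idx I)) (d_l I p (flip l E)) (fun k => Copp (d_l I p E k))),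
    Csum_opp by (intros k Hk; apply In_filter_neq in Hk; apply d_l_flip_other; tauto).
  ring.
Qed.

Lemma onePlusS_onePlusS_D0 I p E i j : In i (idx I) -> In j (idx I) -> i <> j ->
  onePlusS i (onePlusS j (D0 I p)) E = RtoC 0.
Proof.
  intros Hi Hj Hij. unfold onePlusS at 1, Sop.
  rewrite !onePlusS_D0, (flip_comm j i), !(d_l_flip_other I p _ j i) by auto.
  ring.
Qed.

Lemma onePlusS_D0_flip_other I p E j k : In j (idx I) -> In k (idx I) -> j <> k ->
  onePlusS k (D0 I p) (flip j E) = Copp (onePlusS k (D0 I p) E).
Proof.
  intros Hj Hk Hjk. pose proof (onePlusS_onePlusS_D0 I p E j k Hj Hk Hjk) as H0.
  unfold onePlusS at 1, Sop in H0.
  apply (f_equal (Cplus (Copp (onePlusS k (D0 I p) E)))) in H0.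
  rewrite Cplus_0_r in H0. rewrite <- H0. ring.
Qed.

Lemma fold_opBose_D0 I p (c : nat -> R) L E : NoDup L -> incl L (idx I) ->
  fold_right (fun j G => opBose j (c j) G) (D0 I p) L E =
  Cplus (D0 I p E) (Csum L (fun j => Cmult (RtoC (c j)) (onePlusS j (D0 I p) E))).
Proof.
  revert E. induction L as [|j L IH]; intros E HN HL; [simpl; ring|].
  inversion HN as [|? ? Hj HNL]; subst.
  apply incl_cons_inv in HL as [HjI HLI].
  cbn [fold_right]. unfold opBose at 1, onePlusS at 1, Sop.
  rewrite !IH by assumption.
  rewrite (Csum_ext_in L (fun k => Cmult (RtoC (c k)) (onePlusS k (D0 I p) (flip j E)))
    (fun k => Copp (Cmult (RtoC (c k)) (onePlusS k (D0 I p) E)))).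
  - rewrite Csum_opp. change (Csum (j :: L) ?f) with (Cplus (f j) (Csum L f)).
    cbv beta. unfold onePlusS, Sop. ring.
  - intros k Hk. rewrite onePlusS_D0_flip_other by (auto || (intros ->; contradiction)). ring.
Qed.

Lemma prodBose_linearBose I T E p : prodBose I T E (D0 I p) = linearBose I T E (D0 I p).
Proof. apply fold_opBose_D0; [apply NoDup_idx|apply incl_refl]. Qed.

Lemma Rsum_quantized c L f : (forall j, In j L -> exists k : Z, f j = c * IZR k) ->
  exists m : Z, Rsum L f = c * IZR m.
Proof.
  induction L as [|a L IH]; intros H; [exists 0%Z; simpl; ring|].
  destruct (H a (or_introl eq_refl)) as [k Hk].
  destruct IH as [m Hm]; [intros; apply H; right; assumption|].
  exists (k + m)%Z. simpl. rewrite Hk, Hm, plus_IZR. ring.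
Qed.

Lemma u_quantized I p T : (forall j, (1 <= j <= I)%nat -> exists k : Z, p j = 2 * PI * T * IZR k) ->
  forall l, (1 <= l <= I)%nat -> exists m : Z, u p l = 2 * PI * T * IZR m.
Proof.
  intros Hp l Hl. apply Rsum_quantized. intros j Hj. apply in_seq in Hj. apply Hp. lia.
Qed.

Definition lorentz_abs (p E : nat -> R) (l : nat) (x : R) : R := E l / ((x + u p l) ^ 2 + E l ^ 2).
Definition lorentz_disp (p E : nat -> R) (l : nat) (x : R) : R := (x + u p l) / ((x + u p l) ^ 2 + E l ^ 2).

Lemma Cinv_unique a b : Cmult a b = RtoC 1 -> Cinv a = b.
Proof.
  intros H. assert (Ha : a <> RtoC 0) by (intros ->; rewrite Cmult_0_l in H; apply C1_nz; auto).
  rewrite <- (Cmult_1_r (Cinv a)), <- H. field. exact Ha.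
Qed.

Lemma inv_sub_pole_bit p E l b (x : R) : 0 < E l ->
  Cinv (Cminus (RtoC x) (pole p E (2 * l + Nat.b2n b))) =
  Cplus (RtoC (lorentz_disp p E l x)) (Cmult (RtoC (bit_sign b)) (Cmult Ci (RtoC (lorentz_abs p E l x)))).
Proof.
  intros HEl. apply Cinv_unique. rewrite pole_bit. unfold lorentz_disp, lorentz_abs.
  assert (0 < (x + u p l) ^ 2 + E l ^ 2) by (pose proof (pow2_ge_0 (x + u p l)); simpl; nra).
  destruct b; unfold bit_sign; apply injective_projections; simpl; field; simpl in *; nra.
Qed.

Section Assembly.
Variables (I : nat) (p E : nat -> R).
Hypothesis HI : (1 <= I)%nat.
Hypothesis HE : forall j, (1 <= j <= I)%nat -> 0 < E j.
Hypothesis HD : forall j l, (1 <= j <= I)%nat -> (1 <= l <= I)%nat -> j <> l ->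
  forall s s' : R, (s = 1 \/ s = -1) -> (s' = 1 \/ s' = -1) ->
    Cplus (Cplus (Cmult Ci (RtoC (u p j - u p l))) (RtoC (s * E l))) (RtoC (s' * E j)) <> RtoC 0.

Lemma sub_pole_mult (x : R) j :
  Cmult (Cminus (RtoC x) (pole p E (2 * j))) (Cminus (RtoC x) (pole p E (2 * j + 1))) =
  RtoC ((x + u p j) ^ 2 + E j ^ 2).
Proof. rewrite pole_double, pole_double_succ. apply injective_projections; simpl; ring. Qed.

Lemma real_not_pole (x : R) q : In q (doubled (idx I)) -> RtoC x <> pole p E q.
Proof.
  intros Hq Heq. apply In_doubled in Hq as [j [b [Hj ->]]]. apply In_idx in Hj.
  pose proof (HE j Hj). rewrite pole_bit in Heq. injection Heq as _ Hs.
  destruct b; unfold bit_sign in Hs; lra.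
Qed.

Lemma summand_partial_fractions (x : R) :
  RtoC (Rprod (idx I) (fun j => 2 * E j / ((x + u p j) ^ 2 + E j ^ 2))) =
  Csum (idx I) (fun l =>
    Cplus (Cdiv (residue I p E (2 * l)) (Cminus (RtoC x) (pole p E (2 * l))))
          (Cdiv (residue I p E (2 * l + 1)) (Cminus (RtoC x) (pole p E (2 * l + 1))))).
Proof.
  assert (Hx : forall q, In q (doubled (idx I)) -> Cminus (RtoC x) (pole p E q) <> RtoC 0)
    by (intros q Hq; apply Cminus_eq_contra, real_not_pole, Hq).
  rewrite RtoC_Rprod.
  rewrite (Cprod_ext_in _ _ (fun j => Cmult (RtoC (2 * E j))
    (Cmult (Cinv (Cminus (RtoC x) (pole p E (2 * j)))) (Cinv (Cminus (RtoC x) (pole p E (2 * j + 1))))))).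
  - rewrite Cprod_mult, <- (Cprod_doubled (idx I) (fun q => Cinv (Cminus (RtoC x) (pole p E q)))).
    rewrite partial_fractions.
    + rewrite Csum_doubled, <- Csum_scal. apply Csum_ext_in. intros l _.
      unfold residue, Cdiv. ring.
    + destruct I; [lia|]. discriminate.
    + apply NoDup_doubled, NoDup_idx.
    + apply poles_injective; assumption.
    + intros q Hq. apply real_not_pole, Hq.
  - intros j Hj.
    assert (Hq : forall b, In (2 * j + Nat.b2n b)%nat (doubled (idx I)))
      by (intros b; apply In_doubled; exists j, b; auto).
    pose proof (Hx _ (Hq false)) as H0. pose proof (Hx _ (Hq true)) as H1.
    simpl Nat.b2n in H0, H1. rewrite Nat.add_0_r in H0.
    rewrite RtoC_div, <- sub_pole_mult.
    + field. auto.
    + apply In_idx, HE in Hj. pose proof (pow2_ge_0 (x + u p j)). apply Rgt_not_eq. simpl in *. nra.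
Qed.

Definition disp_coef (l : nat) : C := Cplus (residue I p E (2 * l)) (residue I p E (2 * l + 1)).
Definition abs_coef (l : nat) : C := Cmult Ci (Cminus (residue I p E (2 * l)) (residue I p E (2 * l + 1))).

Lemma summand_lorentz_decomposition (x : R) :
  RtoC (Rprod (idx I) (fun j => 2 * E j / ((x + u p j) ^ 2 + E j ^ 2))) =
  Csum (idx I) (fun l => Cplus (Cmult (disp_coef l) (RtoC (lorentz_disp p E l x)))
                               (Cmult (abs_coef l) (RtoC (lorentz_abs p E l x)))).
Proof.
  rewrite summand_partial_fractions. apply Csum_ext_in. intros l Hl.
  apply In_idx, HE in Hl.
  pose proof (inv_sub_pole_bit p E l false x Hl) as H0. pose proof (inv_sub_pole_bit p E l true x Hl) as H1.
  simpl Nat.b2n in H0, H1. rewrite Nat.add_0_r in H0.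
  unfold Cdiv. rewrite H0, H1. unfold disp_coef, abs_coef, bit_sign.
  replace (RtoC (-1)) with (Copp (RtoC 1)) by (apply injective_projections; simpl; ring). ring.
Qed.

Lemma residue_double l : In l (idx I) ->
  residue I p E (2 * l) = Cmult (Cmult (Copp Ci) (RtoC ((-1) ^ (I - 1)))) (d_l I p E l).
Proof.
  intros Hl. pose proof (residue_bit I p E HE HD l false Hl) as H.
  simpl Nat.b2n in H. rewrite Nat.add_0_r in H. rewrite H, d_l_pair_sum.
  f_equal. apply Cprod_ext_in. intros j _. unfold bit_sign. rewrite Rmult_1_l. reflexivity.
Qed.

Lemma residue_double_succ l : In l (idx I) ->
  residue I p E (2 * l + 1) = Cmult (Cmult Ci (RtoC ((-1) ^ (I - 1)))) (d_l I p (flip l E) l).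
Proof.
  intros Hl. pose proof (residue_bit I p E HE HD l true Hl) as H. simpl Nat.b2n in H.
  rewrite H, d_l_pair_sum.
  f_equal. apply Cprod_ext_in. intros j Hj. apply In_filter_neq in Hj as [_ Hjl].
  rewrite flip_at, flip_other by exact Hjl. unfold bit_sign. do 2 f_equal. ring.
Qed.

Lemma sign_pred_succ : (-1) ^ (I - 1) = (-1) ^ (I + 1).
Proof. replace (I + 1)%nat with (I - 1 + 2)%nat by lia. rewrite pow_add. simpl. ring. Qed.

Lemma abs_coef_onePlusS l : In l (idx I) -> abs_coef l = onePlusS l (D0 I p) E.
Proof.
  intros Hl. unfold abs_coef. rewrite residue_double, residue_double_succ, onePlusS_D0, sign_pred_succ
    by assumption.
  transitivity (Cmult (Copp (Cmult Ci Ci)) (Cmult (RtoC ((-1) ^ (I + 1)))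
    (Cplus (d_l I p E l) (d_l I p (flip l E) l)))); [ring|].
  replace (Cmult Ci Ci) with (Copp (RtoC 1)) by (apply injective_projections; simpl; ring). ring.
Qed.

Lemma D0_residues : D0 I p E = Csum (idx I) (fun l => Cmult Ci (residue I p E (2 * l))).
Proof.
  unfold D0. rewrite <- Csum_scal. apply Csum_ext_in. intros l Hl.
  rewrite residue_double, sign_pred_succ by assumption.
  transitivity (Cmult (Copp (Cmult Ci Ci)) (Cmult (RtoC ((-1) ^ (I + 1))) (d_l I p E l))); [|ring].
  replace (Cmult Ci Ci) with (Copp (RtoC 1)) by (apply injective_projections; simpl; ring). ring.
Qed.

Lemma disp_coef_sum : Csum (idx I) disp_coef = RtoC 0.
Proof.
  unfold disp_coef, residue.
  rewrite (Csum_ext_in _ _ (fun l => Cmult (Cprod (idx I) (fun j => RtoC (2 * E j)))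
    (Cplus (pf_coef (pole p E) (doubled (idx I)) (2 * l))
           (pf_coef (pole p E) (doubled (idx I)) (2 * l + 1)))))
    by (intros; ring).
  rewrite Csum_scal, <- Csum_doubled.
  destruct I as [|I']; [lia|].
  change (doubled (idx (S I'))) with (2 :: 3 :: doubled (seq 2 I'))%nat.
  rewrite pf_coef_sum; [ring|discriminate| |].
  - apply (NoDup_doubled (idx (S I'))), NoDup_idx.
  - apply (poles_injective (S I') p E HE HD).
Qed.

Lemma linearBose_abs_coef T :
  linearBose I T E (D0 I p) =
  Csum (idx I) (fun l => Cmult (abs_coef l) (RtoC ((1 + 2 * nB T (E l)) / 2))).
Proof.
  unfold linearBose. rewrite D0_residues.
  rewrite (Csum_ext_in _ (fun j => Cmult (RtoC (nB T (E j))) (onePlusS j (D0 I p) E))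
    (fun j => Cmult (RtoC (nB T (E j))) (abs_coef j))) by (intros; rewrite abs_coef_onePlusS; auto).
  rewrite (Csum_ext_in _ (fun l => Cmult Ci (residue I p E (2 * l)))
    (fun l => Cplus (Cmult (abs_coef l) (RtoC (/ 2))) (Cmult (Cmult Ci (RtoC (/ 2))) (disp_coef l)))).
  - rewrite Csum_plus, Csum_scal, disp_coef_sum, Cmult_0_r, Cplus_0_r, <- Csum_plus.
    apply Csum_ext_in. intros l _.
    rewrite RtoC_div, RtoC_plus, RtoC_mult, RtoC_inv by lra. field.
  - intros l _. unfold abs_coef, disp_coef. rewrite RtoC_inv by lra. field.
Qed.

Lemma Dfull_of_lim T (V : R) : 0 < T ->
  is_lim_seq (fun K => T * zpart K (fun n =>
    Rprod (idx I) (fun j => 2 * E j / ((2 * PI * T * IZR n + u p j) ^ 2 + E j ^ 2)))) V ->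
  Dfull I p E T = V.
Proof.
  intros HT Hlim. set (P := Rprod (idx I) (fun j => 2 * E j)).
  assert (HP : 0 < P) by (apply Rprod_pos; intros j Hj; apply In_idx, HE in Hj; lra).
  unfold Dfull. fold P.
  rewrite (Zsum_of_lim _ (V / (T * P))); [field; lra|].
  apply (is_lim_seq_ext (fun K => / (T * P) * (T * zpart K (fun n =>
    Rprod (idx I) (fun j => 2 * E j / ((2 * PI * T * IZR n + u p j) ^ 2 + E j ^ 2)))))).
  - intros K.
    rewrite (zpart_ext K _ (fun n =>
      P * Rprod (idx I) (fun j => / ((2 * PI * T * IZR n + u p j) ^ 2 + E j ^ 2))))
      by (intros n; unfold P; rewrite <- Rprod_mult; reflexivity).
    rewrite zpart_scal. field. lra.
  - replace (V / (T * P)) with (/ (T * P) * V) by (field; lra).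
    apply (is_lim_seq_scal_l _ _ V), Hlim.
Qed.

Lemma Dfull_abs_coef T : 0 < T ->
  (forall j, (1 <= j <= I)%nat -> exists k : Z, p j = 2 * PI * T * IZR k) ->
  RtoC (Dfull I p E T) = Csum (idx I) (fun l => Cmult (abs_coef l) (RtoC ((1 + 2 * nB T (E l)) / 2))).
Proof.
  intros HT Hp.
  destruct (lim_zpart_complex_lin (idx I) disp_coef abs_coef
    (fun n => Rprod (idx I) (fun j => 2 * E j / ((2 * PI * T * IZR n + u p j) ^ 2 + E j ^ 2)))
    (fun l n => lorentz_disp p E l (2 * PI * T * IZR n)) (fun l n => lorentz_abs p E l (2 * PI * T * IZR n))
    (fun _ => 0) (fun l => (1 + 2 * nB T (E l)) / 2) T) as [Hlim HS].
  - intros n. apply summand_lorentz_decomposition.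
  - intros l Hl. apply In_idx in Hl. destruct (u_quantized I p T Hp l Hl) as [m Hm].
    apply (lim_matsubara_odd T (E l) (u p l) m HT (HE l Hl) Hm).
  - intros l Hl. apply In_idx in Hl. destruct (u_quantized I p T Hp l Hl) as [m Hm].
    apply (lim_matsubara_lorentzian T (E l) (u p l) m HT (HE l Hl) Hm).
  - rewrite (Dfull_of_lim T _ HT Hlim), HS. apply Csum_ext_in. intros l _. ring.
Qed.

End Assembly.

Theorem mainTheorem2 (T : R) (I : nat) (E p : nat -> R) :
  0 < T ->
  (2 <= I)%nat ->
  (forall j, (1 <= j <= I)%nat -> 0 < E j) ->
  (forall j, (1 <= j <= I)%nat -> exists k : Z, p j = 2 * PI * T * IZR k) ->
  (forall j l, (1 <= j <= I)%nat -> (1 <= l <= I)%nat -> j <> l ->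
     forall s s' : R, (s = 1 \/ s = -1) -> (s' = 1 \/ s' = -1) ->
       Cplus (Cplus (Cmult Ci (RtoC (u p j - u p l))) (RtoC (s * E l)))
             (RtoC (s' * E j)) <> RtoC 0) ->
  (forall i j, (1 <= i <= I)%nat -> (1 <= j <= I)%nat -> i <> j ->
     onePlusS i (onePlusS j (D0 I p)) E = RtoC 0)
  /\ RtoC (Dfull I p E T) = linearBose I T E (D0 I p)
  /\ RtoC (Dfull I p E T) = prodBose I T E (D0 I p).
Proof.
  intros HT HI HE Hp HD.
  assert (Hlin : RtoC (Dfull I p E T) = linearBose I T E (D0 I p)).
  { rewrite Dfull_abs_coef, linearBose_abs_coef by (assumption || lia). reflexivity. }
  split; [|split; [exact Hlin|]].
  - intros i j Hi Hj Hij. apply onePlusS_onePlusS_D0; [apply In_idx..|]; assumption.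
  - rewrite Hlin. symmetry. apply prodBose_linearBose.
Qed.
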